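(* Suppose each $D_{ij}$ is strictly increasing. Let $(\phi,x)$ with binary caching decisions $x_i(k)\in\{0,1\}$ be feasible for the joint routing and caching problem, and suppose it contains a routing loop with strictly positive flow, i.e. a sequence of nodes $(l_1,\dots,l_{m})$ with $l_1=l_m$ and an item $k$ such that $\phi_{l_pl_{p+1}}(k)>0$ for $p=1,\dots,m-1$ and $t_{l_1}(k)>0$. Then there exists a feasible $(\phi',x')$ with $T(\phi',x')<T(\phi,x)$, where $T=\sum_{(i,j)\in\mathcal E}D_{ij}(F_{ij})+\sum_iB_i(Y_i)$.
   Context: Network model. $\mathcal G=(\mathcal V,\mathcal E)$ is a finite directed graph with $(j,i)\in\mathcal E$ whenever $(i,j)\in\mathcal E$; $\mathcal N(i)=\{j:(i,j)\in\mathcal E\}$. $\mathcal C$ is a finite catalog; item $k$ has nonempty designated server set $\mathcal S_k\subseteq\mathcal V$. Exogenous request rates $r_i(k)\ge0$. Variables: $\phi_{ij}(k)\in[0,1]$ with $\phi_{ij}(k)=0$ if $(i,j)\notin\mathcal E$, and caching variables (here binary $x_i(k)$, generally $y_i(k)\in[0,1]$). Flow conservation: $x_i(k)+\sum_{j}\phi_{ij}(k)=1$ if $i\notin\mathcal S_k$ and $=0$ if $i\in\mathcal S_k$. A pair is feasible if it satisfies these constraints and the arrival rates $t_i(k)$, solving $t_i(k)=r_i(k)+\sum_j t_j(k)\phi_{ji}(k)$, are uniquely determined, nonnegative and finite. $f_{ji}(k)=t_i(k)\phi_{ij}(k)$, $F_{ij}=\sum_k f_{ij}(k)$, $Y_i=\sum_k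 x_i(k)$. $D_{ij},B_i$ are continuously differentiable, increasing, convex, zero at $0$. *)

From HB Require Import structures.
From mathcomp Require Import all_boot all_order all_algebra.
From mathcomp Require Import all_classical all_reals all_analysis.
Set Implicit Arguments. Unset Strict Implicit. Unset Printing Implicit Defensive.
Import Order.TTheory GRing.Theory Num.Theory.
Import numFieldNormedType.Exports.
Local Open Scope classical_set_scope.
Local Open Scope ring_scope.

Section Network.
Variables (R : realType) (V C : finType).
(* E i j : (i,j) is an edge; S k : designated servers of item k;
   r i k : exogenous request rate of item k at node i. *)
Variables (E : rel V) (S : C -> {set V}) (r : V -> C -> R).

Definition is_arrival_rates (phi : V -> V -> C -> R) (t : V -> C -> R) : Prop :=
  forall i k, t i k = r i k + \sum_(j : V) t j k * phi j i k.

Definition feasible (phi : V -> V -> C -> R) (x : V -> C -> bool) : Prop :=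
  [/\ (forall i j k, 0 <= phi i j k <= 1),
      (forall i j k, ~~ E i j -> phi i j k = 0),
      (forall i k, (x i k)%:R + \sum_(j : V) phi i j k
                     = (if i \in S k then 0 else 1)),
      (exists t, is_arrival_rates phi t /\
                 forall t', is_arrival_rates phi t' -> t' = t) &
      (forall t, is_arrival_rates phi t -> forall i k, 0 <= t i k)].

Definition link_flow (phi : V -> V -> C -> R) (t : V -> C -> R) (i j : V) : R :=
  \sum_(k : C) t j k * phi j i k.

Definition cache_occupancy (x : V -> C -> bool) (i : V) : R :=
  \sum_(k : C) (x i k)%:R.

Definition total_cost (D : V -> V -> R -> R) (B : V -> R -> R)
  (phi : V -> V -> C -> R) (x : V -> C -> bool) (t : V -> C -> R) : R :=
  \sum_(i : V) \sum_(j : V | E i j) D i j (link_flow phi t i j)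
  + \sum_(i : V) B i (cache_occupancy x i).

End Network.

Definition cost_fun_ok (R : realType) (f : R -> R) : Prop :=
  [/\ f 0 = 0,
      (forall u v : R, 0 <= u -> u <= v -> f u <= f v),
      (forall (u v a : R), 0 <= u -> 0 <= v -> 0 <= a <= 1 ->
          f (a * u + (1 - a) * v) <= a * f u + (1 - a) * f v),
      (forall u : R, 0 <= u -> derivable f u 1) &
      (forall u : R, 0 <= u -> {for u, continuous (derive1 f)})].

Definition strictly_increasing_nonneg (R : realType) (f : R -> R) : Prop :=
  forall u v : R, 0 <= u -> u < v -> f u < f v.

From HB Require Import structures.
From mathcomp Require Import all_boot all_order all_algebra.
From mathcomp Require Import all_classical all_reals all_analysis.
From mathcomp Require Import lra.
Import Order.TTheory GRing.Theory Num.Theory.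
Set Implicit Arguments. Unset Strict Implicit.
Local Open Scope ring_scope.

(* Fix the item k of the loop.  Its request flow g i j = t_i(k) phi_ij(k) is a
   conserving flow: node i forwards the fraction sg i of the traffic
   r_i(k) + (inflow of i) it receives, with sg i = 1 unless i serves or
   caches k.  The loop yields a cycle of positive flow through forwarding
   nodes; subtracting the minimal flow along it gives a smaller conserving
   flow g1 with one link emptied.  Dividing g1 by the node throughputs gives
   routing fractions realizing g1, but their arrival rates need not be
   unique: that fails exactly when a nonzero stationary vector exists, and its
   support then traps traffic.  A busy trap contains another positive cycle to
   cancel (induction on the number of links carrying flow); an idle trap is a
   trap of the original routing, contradicting the uniqueness of its arrival
   rates (a determinant argument).  Rerouting item k along the final routing
   keeps the caches, increases no link flow and decreases one, so the total
   cost drops because link costs are strictly increasing. *)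

(* A square matrix fixing a nonzero column vector also fixes a nonzero row
   vector, since 1 - Q is singular. *)
Lemma left_fixed_vector (F : fieldType) (n : nat) (Q : 'M[F]_n) (w : 'rV[F]_n) :
  w != 0 -> Q *m w^T = w^T -> exists2 v : 'rV[F]_n, v != 0 & v *m Q = v.
Proof.
move=> wn0 Qw.
have : \det (1%:M - Q)^T == 0.
  apply/det0P; exists w => //.
  by rewrite -[w]trmxK -trmx_mul mulmxBl mul1mx Qw subrr trmx0.
rewrite det_tr => /det0P [v vn0 hv]; exists v => //.
by move/eqP: hv; rewrite mulmxBr mulmx1 subr_eq0 => /eqP <-.
Qed.

Section StationaryVectors.
Variables (R : realFieldType) (V : finType).
Implicit Types (P : V -> V -> R) (u : V -> R).

Definition stationary P u : Prop := forall i, u i = \sum_j u j * P j i.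

(* Equivalently, t = rho + t P has at most one solution t. *)
Definition only_trivial_stationary P : Prop :=
  forall u, stationary P u -> forall i, u i = 0.

Lemma stationary_sub P (rho a b : V -> R) :
  (forall i, a i = rho i + \sum_j a j * P j i) ->
  (forall i, b i = rho i + \sum_j b j * P j i) ->
  stationary P (fun i => a i - b i).
Proof.
move=> ha hb i; rewrite ha hb opprD addrACA subrr add0r -sumrB.
by apply: eq_bigr => j _; rewrite mulrBl.
Qed.

(* When P is nonnegative with row sums sg <= 1, the support of a stationary
   vector u consists of rows of sum 1 and is closed under the positive
   entries of P: one step of |u| along P loses no mass. *)
Lemma stationary_support_closed P (sg : V -> R) u z :
  (forall i j, 0 <= P i j) -> (forall i, \sum_j P i j = sg i) ->
  (forall i, sg i <= 1) -> stationary P u -> u z != 0 ->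
  sg z = 1 /\ (forall j, 0 < P z j -> u j != 0).
Proof.
move=> P0 Psum sg1 hu uz.
pose a i := `|u i|.
have a0 i : 0 <= a i by rewrite /a normr_ge0.
pose d i := \sum_j a j * P j i - a i.
pose e j := a j - a j * sg j.
have d0 i : 0 <= d i.
  rewrite subr_ge0 /a {1}(hu i); apply: le_trans (ler_norm_sum _ _ _) _.
  by apply: ler_sum => j _; rewrite normrM (ger0_norm (P0 _ _)).
have e0 j : 0 <= e j by rewrite subr_ge0 ler_piMr ?a0 ?sg1.
have de0 : \sum_i d i + \sum_j e j = 0.
  rewrite !sumrB exchange_big /=.
  under eq_bigr do rewrite -mulr_sumr Psum.
  by rewrite addrA subrK subrr.
move/eqP: de0; rewrite paddr_eq0 ?sumr_ge0 // => /andP[/eqP dz /eqP ez].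
have {}dz := psumr_eq0P (fun i _ => d0 i) dz.
have {}ez := psumr_eq0P (fun j _ => e0 j) ez.
have az : 0 < a z by rewrite normr_gt0.
split.
  have /eqP := ez z isT; rewrite subr_eq0 => /eqP a_sg.
  by apply: (mulfI (lt0r_neq0 az)); rewrite mulr1 -a_sg.
move=> j Pzj; have /eqP := dz j isT; rewrite subr_eq0 => /eqP a_in.
rewrite -normr_gt0 -/(a j) -a_in (bigD1 z) //=.
apply: (lt_le_trans (mulr_gt0 az Pzj)); rewrite lerDl sumr_ge0 // => i _.
exact: mulr_ge0.
Qed.

(* Conversely, a nonempty set Z closed under P, on which P is stochastic,
   carries a nonzero stationary vector: P restricted to Z fixes the indicator
   of Z, so it has a nonzero left fixed vector too. *)
Lemma closed_class_stationary (P : V -> V -> R) (Z : {set V}) z :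
  z \in Z -> (forall i, i \in Z -> \sum_j P i j = 1) ->
  (forall i j, i \in Z -> j \notin Z -> P i j = 0) ->
  exists2 u : V -> R, stationary P u & exists i, u i != 0.
Proof.
move=> zZ Zsum Zclosed.
pose ev := @enum_val V (pred_of_simpl predT).
have sum_ev (F : V -> R) : \sum_j F j = \sum_(b < #|V|) F (ev b).
  by rewrite -big_enum_val.
pose Q : 'M[R]_#|V| := \matrix_(a, b) (if ev a \in Z then P (ev a) (ev b) else 0).
pose w : 'rV[R]_#|V| := \row_b (if ev b \in Z then 1 else 0).
have wn0 : w != 0.
  apply/negP => /eqP/matrixP/(_ 0 (enum_rank z)); rewrite !mxE /ev enum_rankK zZ.
  by move/eqP; rewrite oner_eq0.
have Qw : Q *m w^T = w^T.
  apply/matrixP => a i0; rewrite !mxE.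
  under eq_bigr do rewrite !mxE.
  case: ifP => aZ; last by rewrite big1 // => b _; rewrite mul0r.
  rewrite -[RHS](Zsum _ aZ) sum_ev; apply: eq_bigr => b _.
  by case: ifP => bZ; rewrite ?mulr1 // mulr0 Zclosed ?bZ.
have [v vn0 vQ] := left_fixed_vector wn0 Qw.
pose u i := v 0 (enum_rank i).
have vQ_entry b : v 0 b = \sum_a v 0 a * Q a b.
  by rewrite -{1}vQ mxE.
have uZ i : i \notin Z -> u i = 0.
  move=> iZ; rewrite /u vQ_entry big1 // => a _; rewrite mxE.
  by case: ifP => aZ; rewrite ?mulr0 // /ev enum_rankK Zclosed ?mulr0.
exists u.
  move=> i; rewrite /u vQ_entry sum_ev; apply: eq_bigr => a _.
  rewrite mxE /ev enum_valK enum_rankK; case: ifP => // aZ.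
  by have := uZ (enum_val a); rewrite aZ /u enum_valK => ->; rewrite ?mul0r.
have [b vb] : exists b, v 0 b != 0.
  apply/existsP; move: vn0; apply: contraR; rewrite negb_exists => /forallP vb0.
  by apply/eqP/matrixP => i j; rewrite !mxE (ord1 i); apply/eqP; rewrite -[_ == _]negbK.
by exists (enum_val b); rewrite /u enum_valK.
Qed.
End StationaryVectors.

Section InvariantCycles.
Variables (V : finType) (s : V -> V).

Lemma invariant_injective_subset (W0 : {set V}) :
  W0 != finset.set0 -> (forall w, w \in W0 -> s w \in W0) ->
  exists W : {set V}, [/\ W \subset W0, W != finset.set0,
    (forall w, w \in W -> s w \in W) & {in W &, injective s}].
Proof.
have [n] := ubnP #|W0|; elim: n W0 => // n IH W0 W0n W0ne W0s.
have sW0 : s @: W0 \subset W0 by apply/fintype.subsetP => _ /imsetP [w wW0 ->]; apply: W0s.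
have [inj | ninj] := boolP (#|s @: W0| == #|W0|).
  by exists W0; split => //; apply/imset_injP.
have [|||W [WsW0 Wne Ws Winj]] := IH (s @: W0).
- by rewrite -ltnS (leq_trans _ W0n) // ltnS ltn_neqAle ninj leq_imset_card.
- by rewrite imset_eq0.
- by move=> _ /imsetP [w wW0 ->]; apply/imset_f/W0s.
by exists W; split => //; apply: fintype.subset_trans WsW0 sW0.
Qed.

Lemma sum_over_predecessors (R : nmodType) (W : {set V}) (e : R) i :
  (forall w, w \in W -> s w \in W) -> {in W &, injective s} ->
  \sum_j (if (j \in W) && (i == s j) then e else 0) = if i \in W then e else 0.
Proof.
move=> Ws Winj.
have sW : s @: W = W.
  apply/eqP; rewrite eqEcard (card_in_imset Winj) leqnn andbT.
  by apply/fintype.subsetP => _ /imsetP [w wW ->]; apply: Ws.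
case: (boolP (i \in W)) => iW; last first.
  apply: big1 => j _; case: (boolP (j \in W)) => //= jW.
  by case: eqP => // iE; rewrite iE Ws in iW.
move: iW; rewrite -{1}sW => /imsetP [j0 j0W ->].
rewrite (bigD1 j0) //= j0W eqxx big1 ?addr0 // => j nj.
case: (boolP (j \in W)) => //= jW; case: eqP => // /esym /(Winj _ _ jW j0W) ej.
by rewrite ej eqxx in nj.
Qed.

End InvariantCycles.

Section ConservingFlows.
Variables (R : realFieldType) (V : finType) (E : rel V) (sg rho : V -> R).

(* g i j is the rate of one item on link (i, j); node i receives rho i
   exogenously plus its inflow, and forwards the fraction sg i of it. *)
Definition conserving_flow (g : V -> V -> R) : Prop :=
  [/\ forall i j, 0 <= g i j, forall i j, ~~ E i j -> g i j = 0 &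
      forall i, \sum_j g i j = sg i * (rho i + \sum_j g j i)].

Lemma cancel_injective_cycle g (W : {set V}) (s : V -> V) :
  conserving_flow g -> W != finset.set0 ->
  (forall w, w \in W -> s w \in W) -> {in W &, injective s} ->
  (forall w, w \in W -> 0 < g w (s w)) -> (forall w, w \in W -> sg w = 1) ->
  exists g', [/\ conserving_flow g', forall i j, g' i j <= g i j &
                 exists a b, 0 < g a b /\ g' a b = 0].
Proof.
move=> [g0 gE gsum] /set0Pn [z zW] Ws Winj gpos sg1.
have [w0 w0W gmin] := arg_minP (fun w => g w (s w)) zW.
pose e := g w0 (s w0).
pose cyc i j : R := if (i \in W) && (j == s i) then e else 0.
have cyc_out i : \sum_j cyc i j = if i \in W then e else 0.
  by rewrite /cyc; case: (i \in W) => /=; [rewrite -big_mkcond big_pred1_eq | rewrite big1].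
have cyc_in i : \sum_j cyc j i = if i \in W then e else 0.
  by rewrite -(sum_over_predecessors e i Ws Winj); apply: eq_bigr => j _; rewrite /cyc eq_sym.
have cyc_le i j : cyc i j <= g i j.
  by rewrite /cyc; case: (boolP (i \in W)) => //= iW; case: eqP => // ->; apply: gmin.
exists (fun i j => g i j - cyc i j); split.
- split=> [i j|i j nE|i]; first by rewrite subr_ge0.
    rewrite gE // /cyc; case: (boolP (i \in W)) => /= iW; last by rewrite subrr.
    case: eqP => [ej|_]; last by rewrite subrr.
    by have := gpos _ iW; rewrite -ej gE // ltxx.
  rewrite /= !sumrB cyc_out cyc_in gsum; case: ifP => iW; last by rewrite !subr0.
  by rewrite sg1 // !mul1r addrA.
- by move=> i j; rewrite gerBl /cyc; case: ifP => // _; apply: g0.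
- by exists w0, (s w0); split; [apply: gpos | rewrite /cyc eqxx andbT ifT ?subrr].
Qed.

Lemma cancel_positive_cycle g (W0 : {set V}) (s : V -> V) :
  conserving_flow g -> W0 != finset.set0 -> (forall w, w \in W0 -> s w \in W0) ->
  (forall w, w \in W0 -> 0 < g w (s w)) -> (forall w, w \in W0 -> sg w = 1) ->
  exists g', [/\ conserving_flow g', forall i j, g' i j <= g i j &
                 exists a b, 0 < g a b /\ g' a b = 0].
Proof.
move=> g_ok W0ne W0s gpos sg1.
have [W [/fintype.subsetP WW0 Wne Ws Winj]] := invariant_injective_subset W0ne W0s.
by apply: cancel_injective_cycle Wne Ws Winj _ _ => // w /WW0; [apply: gpos | apply: sg1].
Qed.

Definition flow_support (g : V -> V -> R) : nat :=
  #|[set ij : V * V | 0 < g ij.1 ij.2]|.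

Lemma flow_support_lt (g g' : V -> V -> R) a b :
  (forall i j, g' i j <= g i j) -> 0 < g a b -> g' a b = 0 ->
  (flow_support g' < flow_support g)%N.
Proof.
move=> g'g gab g'ab; apply: proper_card; apply/properP; split.
  by apply/fintype.subsetP => -[i j]; rewrite !inE /= => /lt_le_trans; apply.
by exists (a, b); rewrite !inE /= ?gab ?g'ab ?ltxx.
Qed.

End ConservingFlows.

Section FlowToRouting.
Variables (R : realFieldType) (V : finType) (E : rel V) (sg rho : V -> R).
Hypothesis rho_ge0 : forall i, 0 <= rho i.
Hypothesis sg_range : forall i, 0 <= sg i <= 1.

Definition routing (Q : V -> V -> R) : Prop :=
  [/\ forall i j, 0 <= Q i j, forall i j, ~~ E i j -> Q i j = 0 &
      forall i, \sum_j Q i j = sg i].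

Definition trapping (Q : V -> V -> R) (Z : {set V}) : Prop :=
  forall z, z \in Z -> sg z = 1 /\ (forall j, 0 < Q z j -> j \in Z).

Lemma stationary_support_trapping Q u :
  routing Q -> stationary Q u -> trapping Q [set i | u i != 0].
Proof.
move=> [Q0 _ Qsum] u_st z; rewrite inE => uz.
have sg1 i : sg i <= 1 by case/andP: (sg_range i).
have [-> uj] := stationary_support_closed Q0 Qsum sg1 u_st uz.
by split => // j /uj; rewrite inE.
Qed.

(* A reference routing with unique arrival rates, used at idle nodes. *)
Variable P : V -> V -> R.
Hypotheses (P_routing : routing P) (P_unique : only_trivial_stationary P).

Definition throughput (g : V -> V -> R) (i : V) : R := rho i + \sum_j g j i.

Definition routing_of (g : V -> V -> R) (i j : V) : R :=
  if 0 < throughput g i then g i j / throughput g i else P i j.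

Section OneFlow.
Variable g : V -> V -> R.
Hypothesis g_ok : conserving_flow E sg rho g.

Lemma throughput_ge0 i : 0 <= throughput g i.
Proof. by case: g_ok => g0 _ _; rewrite addr_ge0 ?sumr_ge0. Qed.

Lemma outflow_le_throughput i j : g i j <= throughput g i.
Proof.
case: g_ok => g0 _ gsum; apply: (@le_trans _ _ (\sum_j g i j)).
  by rewrite (bigD1 j) //= lerDl sumr_ge0.
by rewrite gsum ler_piMl ?throughput_ge0 //; case/andP: (sg_range i).
Qed.

Lemma inflow_le_throughput i j : g j i <= throughput g i.
Proof.
case: g_ok => g0 _ _.
by rewrite /throughput (bigD1 j) //= addrCA lerDl addr_ge0 ?sumr_ge0.
Qed.

Lemma throughput_routing_of i j : throughput g i * routing_of g i j = g i j.
Proof.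
rewrite /routing_of; case: ifP => [tpos|]; first by rewrite mulrC divfK // gt_eqF.
move/negbT; rewrite -leNgt => t0.
have /eqP t_eq0 : throughput g i == 0 by rewrite eq_le t0 throughput_ge0.
case: g_ok => g0 _ _; apply/esym/eqP; rewrite t_eq0 mul0r eq_le g0 andbT.
by rewrite -t_eq0 outflow_le_throughput.
Qed.

Lemma routing_of_routing : routing (routing_of g).
Proof.
case: g_ok P_routing => g0 gE gsum [P0 PE Psum]; split=> [i j|i j nE|i].
- rewrite /routing_of; case: ifP => // tpos; exact/divr_ge0/ltW.
- by rewrite /routing_of (gE _ _ nE) (PE _ _ nE) mul0r; case: ifP.
have [tpos|tle] := boolP (0 < throughput g i); last first.
  by rewrite -(Psum i); apply: eq_bigr => j _; rewrite /routing_of (negbTE tle).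
rewrite (eq_bigr (fun j => g i j / throughput g i)) => [|j _]; last first.
  by rewrite /routing_of tpos.
by rewrite -mulr_suml gsum mulfK // gt_eqF.
Qed.

Lemma throughput_arrival i :
  throughput g i = rho i + \sum_j throughput g j * routing_of g j i.
Proof. by congr (_ + _); apply: eq_bigr => j _; rewrite throughput_routing_of. Qed.

(* A trap of g, when busy, contains a cycle of positive flow through nodes
   forwarding everything; cancelling it shrinks the support of g. *)
Lemma busy_trap_reducible Z :
  trapping (routing_of g) Z -> (exists2 z, z \in Z & 0 < throughput g z) ->
  exists g', [/\ conserving_flow E sg rho g', forall i j, g' i j <= g i j &
                 (flow_support g' < flow_support g)%N].
Proof.
move=> Ztrap [z0 z0Z tz0]; have [Q0 _ Qsum] := routing_of_routing.
pose W0 := [set i in Z | 0 < throughput g i].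
pose s w := odflt w [pick j | 0 < routing_of g w j].
have s_pos w : w \in Z -> 0 < routing_of g w (s w).
  move=> wZ; rewrite /s; case: pickP => [j //|none].
  have := Qsum w; rewrite (proj1 (Ztrap _ wZ)) big1 => [/eqP|j _].
    by rewrite eq_sym oner_eq0.
  by apply/eqP; rewrite eq_le Q0 andbT leNgt none.
have gpos w : w \in W0 -> 0 < g w (s w).
  by rewrite inE => /andP [wZ tw]; rewrite -throughput_routing_of mulr_gt0 ?s_pos.
have W0s w : w \in W0 -> s w \in W0.
  move=> wW0; move: (wW0); rewrite [_ \in W0]inE => /andP [wZ _].
  rewrite [_ \in W0]inE (proj2 (Ztrap _ wZ)) ?s_pos //=.
  exact: lt_le_trans (gpos _ wW0) (inflow_le_throughput _ _).
have W0ne : W0 != finset.set0 by apply/set0Pn; exists z0; rewrite inE z0Z.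
have W0sg w : w \in W0 -> sg w = 1 by rewrite inE => /andP [/Ztrap []].
have [g' [g'_ok g'g [a [b [gab g'ab]]]]] := cancel_positive_cycle g_ok W0ne W0s gpos W0sg.
by exists g'; split => //; apply: flow_support_lt g'g gab g'ab.
Qed.

(* An idle trap of g is a trap of the reference routing P, hence empty. *)
Lemma idle_trap_empty Z :
  trapping (routing_of g) Z -> (forall z, z \in Z -> ~~ (0 < throughput g z)) ->
  Z = finset.set0.
Proof.
move=> Ztrap idle; apply/eqP/set0Pn => -[z0 z0Z].
have QP z j : z \in Z -> routing_of g z j = P z j.
  by move=> zZ; rewrite /routing_of (negbTE (idle _ zZ)).
have [P0 _ Psum] := P_routing.
have [i iZ|i j iZ jZ|v v_st [j /eqP]] := closed_class_stationary (P := P) z0Z.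
- by rewrite -(proj1 (Ztrap _ iZ)) Psum.
- apply/eqP; rewrite eq_le P0 andbT leNgt -QP //.
  by apply: contra jZ; apply: (proj2 (Ztrap _ iZ)).
by rewrite (P_unique v_st).
Qed.

(* If the routing realizing g admits several arrival rates, the support of
   a nonzero stationary vector is a nonempty trap, which cannot be idle. *)
Lemma reduce_nonunique_flow : ~ only_trivial_stationary (routing_of g) ->
  exists g', [/\ conserving_flow E sg rho g', forall i j, g' i j <= g i j &
                 (flow_support g' < flow_support g)%N].
Proof.
move=> /existsNP [u /not_implyP [u_st /existsNP [i0 /eqP ui0]]].
have Ztrap := stationary_support_trapping routing_of_routing u_st.
apply: (busy_trap_reducible Ztrap); apply/exists_inP; apply: contraT => /exists_inPn idle.
by move: (idle_trap_empty Ztrap idle) => /setP/(_ i0); rewrite !inE ui0.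
Qed.

End OneFlow.

Lemma flow_to_routing g : conserving_flow E sg rho g ->
  exists Q (tau : V -> R), [/\ routing Q, only_trivial_stationary Q,
    (forall i, tau i = rho i + \sum_j tau j * Q j i), (forall i, 0 <= tau i) &
    (forall i j, tau i * Q i j <= g i j)].
Proof.
have [n] := ubnP (flow_support g); elim: n g => // n IH g gn g_ok.
have [Q_unique | nonunique] := pselect (only_trivial_stationary (routing_of g)).
  exists (routing_of g), (throughput g); split => //.
  - exact: routing_of_routing.
  - exact: throughput_arrival.
  - exact: throughput_ge0.
  - by move=> i j; rewrite throughput_routing_of.
have [g' [g'_ok g'g g'lt]] := reduce_nonunique_flow g_ok nonunique.
have [Q [tau [Q_ok Q_unique tau_arr tau0 tauQ]]] := IH g' (leq_trans g'lt gn) g'_ok.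
by exists Q, tau; split => // i j; apply: le_trans (tauQ i j) (g'g i j).
Qed.

End FlowToRouting.

Lemma closed_walk_successor (T : finType) (e : rel T) (l : seq T) (l0 : T) :
  (2 <= size l)%N -> nth l0 l 0 = nth l0 l (size l).-1 ->
  (forall p, (p < (size l).-1)%N -> e (nth l0 l p) (nth l0 l p.+1)) ->
  exists (W0 : {set T}) (s : T -> T),
    [/\ W0 != finset.set0, forall w, w \in W0 -> s w \in W0 &
        forall w, w \in W0 -> e w (s w)].
Proof.
move=> l2 l_closed l_e; set m := (size l).-1.
have m_gt0 : (0 < m)%N by rewrite /m -ltnS prednK // ltnW.
pose W0 := [set nth l0 l (val p) | p : 'I_m].
pose s v := nth l0 l (index v l).+1.
have W0_index v : v \in W0 -> (index v l < m)%N /\ nth l0 l (index v l) = v.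
  move=> /imsetP [p _ ->].
  have pl : (p < size l)%N by rewrite (leq_trans (ltn_ord p)) ?leq_pred.
  by split; [apply: leq_ltn_trans (index_nth l0 pl) (ltn_ord p) | rewrite nth_index ?mem_nth].
exists W0, s; split.
- by apply/set0Pn; exists (nth l0 l 0); apply/imsetP; exists (Ordinal m_gt0).
- move=> v /W0_index [vm _]; rewrite /s.
  have [next_m | ] := ltnP (index v l).+1 m; first by apply/imsetP; exists (Ordinal next_m).
  rewrite leq_eqVlt ltnNge vm orbF => /eqP <-.
  by rewrite -l_closed; apply/imsetP; exists (Ordinal m_gt0).
- by move=> v /W0_index [vm vl]; rewrite -{1}vl; apply: l_e.
Qed.

Section Network.
Variables (R : realType) (V C : finType).
Variables (E : rel V) (S : C -> {set V}) (r : V -> C -> R).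
Hypothesis r_ge0 : forall i k, 0 <= r i k.

Definition forward_share (x : V -> C -> bool) (k : C) (i : V) : R :=
  (if i \in S k then 0 else 1) - (x i k)%:R.

Definition item_flow (phi : V -> V -> C -> R) (t : V -> C -> R) (k : C) (i j : V) : R :=
  t i k * phi i j k.

Definition reroute (phi : V -> V -> C -> R) (k : C) (Q : V -> V -> R) : V -> V -> C -> R :=
  fun i j c => if c == k then Q i j else phi i j c.

Definition reroute_rates (t : V -> C -> R) (k : C) (tau : V -> R) : V -> C -> R :=
  fun i c => if c == k then tau i else t i c.

Lemma link_flow_reroute phi t k Q tau i j :
  link_flow (reroute phi k Q) (reroute_rates t k tau) i j
  = link_flow phi t i j - item_flow phi t k j i + tau j * Q j i.
Proof.
rewrite /link_flow (bigD1 k) // [in RHS](bigD1 k) //= /reroute /reroute_rates eqxx.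
rewrite (eq_bigr (fun c => t j c * phi j i c)) => [|c /negbTE ->] //.
by rewrite /item_flow; lra.
Qed.

Lemma link_flow_ge0 phi x t i j :
  feasible E S r phi x -> is_arrival_rates r phi t -> 0 <= link_flow phi t i j.
Proof.
move=> [phi01 _ _ _ t_ge0] t_arr; apply: sumr_ge0 => c _.
by rewrite mulr_ge0 ?(t_ge0 _ t_arr) //; case/andP: (phi01 j i c).
Qed.

Section Feasible.
Variables (phi : V -> V -> C -> R) (x : V -> C -> bool).
Hypothesis feas : feasible E S r phi x.

Lemma feasible_item_routing k : routing E (forward_share x k) (fun i j => phi i j k).
Proof.
have [phi01 phiE cons _ _] := feas; split=> [i j|i j|i]; first by case/andP: (phi01 i j k).
  exact: phiE.
by rewrite /forward_share -(cons i k) addrC addKr.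
Qed.

Lemma forward_share_range k i : 0 <= forward_share x k i <= 1.
Proof.
have [phi0 _ share] := feasible_item_routing k.
have : 0 <= forward_share x k i by rewrite -share sumr_ge0.
by rewrite /forward_share; case: (i \in S k); case: (x i k) => /=; lra.
Qed.


Lemma feasible_unique_stationary c : only_trivial_stationary (fun i j => phi i j c).
Proof.
have [_ _ _ [t0 [t0_arr t0_unique]] _] := feas.
move=> u u_st i.
pose t1 i' c' := t0 i' c' + (if c' == c then u i' else 0).
have t1_arr : is_arrival_rates r phi t1.
  move=> j c'; rewrite /t1 {1}t0_arr; case: eqP => [->|_].
    rewrite -addrA (u_st j) -big_split /=; congr (_ + _).
    by apply: eq_bigr => i' _; rewrite mulrDl.
  by rewrite addr0; congr (_ + _); apply: eq_bigr => i' _; rewrite addr0.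
have /eqP := congr1 (fun f => f i c) (t0_unique _ t1_arr).
by rewrite /t1 eqxx -subr_eq0 addrC addKr => /eqP.
Qed.

Section ArrivalRates.
Variable t : V -> C -> R.
Hypothesis t_arr : is_arrival_rates r phi t.

Lemma forward_share_flow_one k i j :
  0 < item_flow phi t k i j -> forward_share x k i = 1.
Proof.
have [phi0 _ share] := feasible_item_routing k.
move=> flow_pos; have phi_pos : 0 < phi i j k.
  rewrite lt_def phi0 andbT; apply: contraTneq flow_pos => phi_eq0.
  by rewrite /item_flow phi_eq0 mulr0 ltxx.
have : 0 < forward_share x k i.
  rewrite -share (bigD1 j) //=; apply: (lt_le_trans phi_pos).
  by rewrite lerDl sumr_ge0.
by rewrite /forward_share; case: (i \in S k); case: (x i k) => /=; lra.
Qed.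

Lemma positive_flow_edge k i j : 0 < item_flow phi t k i j -> E i j.
Proof.
have [_ phiE _ _ _] := feas.
by apply: contraTT => /(phiE _ _ k) phi0; rewrite /item_flow phi0 mulr0 ltxx.
Qed.

Lemma item_flow_conserving k :
  conserving_flow E (forward_share x k) (r^~ k) (item_flow phi t k).
Proof.
have [phi0 phiE share] := feasible_item_routing k.
have [_ _ _ _ t_ge0] := feas.
split=> [i j|i j nE|i]; rewrite /item_flow.
- by rewrite mulr_ge0 ?(t_ge0 _ t_arr).
- by rewrite phiE ?mulr0.
- by rewrite -mulr_sumr share mulrC -t_arr.
Qed.

Lemma item_flow_le_arrival k i j : item_flow phi t k i j <= t j k.
Proof.
have [g0 _ _] := item_flow_conserving k.
rewrite [leRHS]t_arr (bigD1 i) //= addrCA lerDl addr_ge0 ?sumr_ge0 // => i' _.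
exact: g0.
Qed.

Lemma walk_flow_pos (l : seq V) k l0 :
  (forall p, (p < (size l).-1)%N -> 0 < phi (nth l0 l p) (nth l0 l p.+1) k) ->
  0 < t (nth l0 l 0) k ->
  forall p, (p < (size l).-1)%N -> 0 < item_flow phi t k (nth l0 l p) (nth l0 l p.+1).
Proof.
move=> l_pos t0_pos.
have t_pos p : (p <= (size l).-1)%N -> 0 < t (nth l0 l p) k.
  elim: p => [//|p IH] lt_p; apply: lt_le_trans (item_flow_le_arrival _ _ _).
  by apply: mulr_gt0; [apply/IH/ltnW | apply: l_pos].
by move=> p lt_p; apply: mulr_gt0; [apply/t_pos/ltnW | apply: l_pos].
Qed.

Lemma reroute_feasible k Q tau :
  routing E (forward_share x k) Q -> only_trivial_stationary Q ->
  (forall i, tau i = r i k + \sum_j tau j * Q j i) -> (forall i, 0 <= tau i) ->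
  feasible E S r (reroute phi k Q) x /\
  is_arrival_rates r (reroute phi k Q) (reroute_rates t k tau).
Proof.
move=> [Q0 QE Qsum] Q_unique tau_arr tau0.
have [phi01 phiE cons _ t_ge0] := feas.
set phi' := reroute phi k Q; set t' := reroute_rates t k tau.
have arr' : is_arrival_rates r phi' t'.
  move=> i c; rewrite /t' /phi' /reroute /reroute_rates.
  by have [->|nck] := eqVneq c k; [apply: tau_arr | apply: t_arr].
have unique' t2 : is_arrival_rates r phi' t2 -> t2 = t'.
  move=> t2_arr; apply/funext => i; apply/funext => c; apply/eqP.
  rewrite /t' /reroute_rates -subr_eq0; have [->|nck] := eqVneq c k.
    have t2k j : t2 j k = r j k + \sum_i' t2 i' k * Q i' j.
      by rewrite t2_arr /phi' /reroute; under eq_bigr do rewrite eqxx.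
    exact/eqP/(Q_unique _ (stationary_sub t2k tau_arr)).
  have t2c j : t2 j c = r j c + \sum_i' t2 i' c * phi i' j c.
    by rewrite t2_arr /phi' /reroute; under eq_bigr do rewrite (negbTE nck).
  exact/eqP/(feasible_unique_stationary (stationary_sub t2c (t_arr^~ c))).
split=> //; split.
- move=> i j c; rewrite /phi' /reroute; case: eqP => _; last exact: phi01.
  rewrite Q0 (le_trans (_ : Q i j <= \sum_j' Q i j')) //.
    by rewrite (bigD1 j) //= lerDl sumr_ge0.
  by rewrite Qsum; case/andP: (forward_share_range k i).
- by move=> i j c nE; rewrite /phi' /reroute; case: eqP => _; [apply: QE | apply: phiE].
- move=> i c; rewrite /phi' /reroute.
  have [->|nck] := eqVneq c k; last exact: cons.
  by rewrite Qsum /forward_share addrC subrK.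
- by exists t'.
- move=> t2 /unique' -> i c; rewrite /t' /reroute_rates.
  by case: eqP => _; [apply: tau0 | apply: t_ge0].
Qed.

End ArrivalRates.
End Feasible.
End Network.

Arguments forward_share {R V C}.

Lemma ler_ltr_sum (R : numDomainType) (I : finType) (P : pred I) (F G : I -> R) i0 :
  P i0 -> (forall i, P i -> F i <= G i) -> F i0 < G i0 ->
  \sum_(i | P i) F i < \sum_(i | P i) G i.
Proof.
move=> P_i0 FG F_i0; rewrite (bigD1 i0) //= [ltRHS](bigD1 i0) //=.
by apply: ltr_leD => //; apply: ler_sum => i /andP [Pi _]; apply: FG.
Qed.

Lemma total_cost_lt (R : realType) (V C : finType) (E : rel V)
    (D : V -> V -> R -> R) (B : V -> R -> R) (phi phi' : V -> V -> C -> R)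
    (x : V -> C -> bool) (t t' : V -> C -> R) a b :
  (forall i j, cost_fun_ok (D i j)) -> (forall i j, strictly_increasing_nonneg (D i j)) ->
  (forall i j, 0 <= link_flow phi' t' i j) ->
  (forall i j, link_flow phi' t' i j <= link_flow phi t i j) ->
  E a b -> link_flow phi' t' a b < link_flow phi t a b ->
  total_cost E D B phi' x t' < total_cost E D B phi x t.
Proof.
move=> D_ok D_strict F'0 F'F Eab F'lt; rewrite /total_cost ltrD2r.
have D_mono i j : D i j (link_flow phi' t' i j) <= D i j (link_flow phi t i j).
  by case: (D_ok i j) => _ D_incr _ _ _; apply: D_incr.
apply: (@ler_ltr_sum _ _ xpredT _ _ a) => // [i _|]; first by apply: ler_sum.
by apply: (@ler_ltr_sum _ _ (E a) _ _ b) => //; apply: D_strict.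
Qed.

Theorem mainTheorem7 (R : realType) (V C : finType)
  (E : rel V) (S : C -> {set V}) (r : V -> C -> R)
  (D : V -> V -> R -> R) (B : V -> R -> R)
  (hEsym : forall i j, E i j -> E j i)
  (hS : forall k, S k != finset.set0)
  (hr : forall i k, 0 <= r i k)
  (hD : forall i j, cost_fun_ok (D i j))
  (hDstrict : forall i j, strictly_increasing_nonneg (D i j))
  (hB : forall i, cost_fun_ok (B i))
  (phi : V -> V -> C -> R) (x : V -> C -> bool) (t : V -> C -> R)
  (hfeas : feasible E S r phi x)
  (ht : is_arrival_rates r phi t)
  (l : seq V) (k : C) (l0 : V)
  (hsize : (2 <= size l)%N)
  (hclosed : nth l0 l 0 = nth l0 l (size l).-1)
  (hpos : forall p, (p < (size l).-1)%N -> 0 < phi (nth l0 l p) (nth l0 l p.+1) k)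
  (htpos : 0 < t (nth l0 l 0) k) :
  exists (phi' : V -> V -> C -> R) (x' : V -> C -> bool) (t' : V -> C -> R),
    [/\ feasible E S r phi' x', is_arrival_rates r phi' t' &
        total_cost E D B phi' x' t' < total_cost E D B phi x t].
Proof.
have [W0 [s [W0ne W0s gpos]]] :=
  closed_walk_successor (e := [rel v w | 0 < item_flow phi t k v w])
    hsize hclosed (walk_flow_pos hr hfeas ht hpos htpos).
have W0share w : w \in W0 -> forward_share S x k w = 1 :> R.
  by move=> /gpos /= g_pos; apply: (forward_share_flow_one hfeas g_pos).
have [g1 [g1_ok g1g [a [b [gab g1ab]]]]] :=
  cancel_positive_cycle (item_flow_conserving hfeas ht k) W0ne W0s gpos W0share.
have [Q [tau [Q_ok Q_unique tau_arr tau0 tauQ]]] :=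
  flow_to_routing (hr^~ k) (forward_share_range hfeas k)
    (feasible_item_routing hfeas k) (feasible_unique_stationary hfeas (c := k)) g1_ok.
have [feas' arr'] := reroute_feasible hfeas ht Q_ok Q_unique tau_arr tau0.
exists (reroute phi k Q), x, (reroute_rates t k tau); split => //.
(* Link flows do not increase, and strictly decrease on the link (b, a). *)
have tauQ_le i j : tau i * Q i j <= item_flow phi t k i j := le_trans (tauQ i j) (g1g i j).
apply: (total_cost_lt B x hD hDstrict (fun i j => link_flow_ge0 i j feas' arr') _
          (hEsym _ _ (positive_flow_edge hfeas gab))).
- by move=> i j; rewrite link_flow_reroute; move: (tauQ_le j i); lra.
- by rewrite link_flow_reroute; move: (tauQ a b) gab; rewrite g1ab; lra.
Qed.
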